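(* Let $n \ge 2$ and let $A \in \mathsf{M}_n(\mathbb{C})$ be convexoid. Then for every $k \in \{1,\ldots,n\}$, the field of values $F(A_{(k)})$ is inscribed in the polygon $\partial F(A)$; that is, $F(A_{(k)})$ has nonempty intersection with every side $\operatorname{co}(\lambda_j,\lambda_{j+1})$, $j = 1,\ldots,d$, of the polygon $\partial F(A)$ (notation as in the context).
   Context: For $B \in \mathsf{M}_m(\mathbb{C})$, the field of values (numerical range) is $F(B) = \{x^\ast B x : x \in \mathbb{C}^m,\ x^\ast x = 1\}$. $A_{(k)}$ denotes the $(n-1)$-by-$(n-1)$ principal submatrix of $A$ obtained by deleting the $k$th row and $k$th column. $\operatorname{co}(S)$ denotes the convex hull of a set $S \subset \mathbb{C}$, and $\sigma(A)$ the spectrum of $A$. $A$ is called convexoid if $F(A) = \operatorname{co}(\sigma(A))$. In that case $F(A)$ is the convex polygon $\operatorname{co}(\lambda_1,\ldots,\lambda_n)$, where $\lambda_1,\ldots,\lambda_n$ are the eigenvalues of $A$; label them so that $\lambda_1,\ldots,\lambda_d$ ($1 \le d \le n$) are the vertices of this polygon, listed consecutively along its boundary, so that $\partial F(A) = \bigcup_{j=1}^d \operatorname{co}(\lambda_j,\lambda_{j+1})$ with the convention $\lambda_{d+1} := \lambda_1$. A set $G$ is said to be inscribed in $F(A)$ if $G \cap \operatorname{co}(\lambda_j,\lambda_{j+1}) \neq \emptyset$ for all $j \in \{1,\ldots,d\}$. *)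

From HB Require Import structures.
From mathcomp Require Import all_boot all_order all_algebra.
Set Implicit Arguments. Unset Strict Implicit. Unset Printing Implicit Defensive.
Import Order.TTheory GRing.Theory Num.Theory.
Local Open Scope ring_scope.

Section Defs.
Variable C : numClosedFieldType.

Definition field_of_values m (B : 'M[C]_m) : C -> Prop :=
  fun z => exists x : 'cV[C]_m,
    map_mx Num.conj x^T *m x = 1%:M /\ z = (map_mx Num.conj x^T *m B *m x) ord0 ord0.

Definition psubmx n (A : 'M[C]_n.+1) (k : 'I_n.+1) : 'M[C]_n :=
  row' k (col' k A).

Definition spectrum n (A : 'M[C]_n) : C -> Prop := fun a => eigenvalue A a.

Definition co (S : C -> Prop) : C -> Prop :=
  fun z => exists (m : nat) (w p : 'I_m -> C),
    (forall i, S (p i)) /\ (forall i, 0 <= w i) /\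
    \sum_(i < m) w i = 1 /\ z = \sum_(i < m) w i * p i.

Definition seg (a b : C) : C -> Prop := co (fun z => z = a \/ z = b).

Definition convexoid n (A : 'M[C]_n) : Prop :=
  forall z, field_of_values A z <-> co (spectrum A) z.

Definition extreme (S : C -> Prop) (z : C) : Prop :=
  S z /\ forall x y t, S x -> S y -> 0 < t < 1 -> z = t * x + (1 - t) * y -> x = y.

Definition boundary (S : C -> Prop) (z : C) : Prop :=
  (forall e : C, 0 < e -> exists w, S w /\ `|w - z| < e) /\
  (forall e : C, 0 < e -> exists w, ~ S w /\ `|w - z| < e).

(* j-th side co(v_j, v_{j+1}) with v_{d+1} := v_1 (0-based, cyclic) *)
Definition side (v : seq C) (j : nat) : C -> Prop :=
  seg (nth 0 v j) (nth 0 v (j.+1 %% size v)).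

(* v = [lambda_1; ...; lambda_d] are the vertices of the polygon P, listed
   consecutively along its boundary, so that bd P = U_j co(v_j, v_{j+1}) *)
Definition vertex_labeling (P : C -> Prop) (v : seq C) : Prop :=
  uniq v /\ (forall z, z \in v <-> extreme P z) /\
  (forall z, boundary P z <-> exists2 j, (j < size v)%N & side v j z).

Definition inscribed (G P : C -> Prop) : Prop :=
  forall v, vertex_labeling P v ->
  forall j, (j < size v)%N -> exists z, G z /\ side v j z.

End Defs.

(* If A is convexoid, F(A) = co(sigma(A)) is a convex polygon.  Take a side
   [a, b] with a <> b.  Its midpoint lies on the boundary of F(A), so F(A)
   lies in a closed half-plane Re (c z) <= M whose edge line passes through a
   and b.  Then P = M I - (c A + c^* A^* ) / 2 satisfies x^* P x >= 0 for all x,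
   and x^* P x = 0 for unit vectors x, y with x^* A x = a and y^* A y = b.
   Polarization makes every vector of span(x, y) P-null, and this span
   contains a unit vector u with u_k = 0.  So u^* A u is a point of F(A_(k))
   on the line through a and b, and it lies on [a, b] because a and b are
   vertices.  If the polygon has a single vertex, F(A) is that point, and
   F(A_(k)), which is contained in F(A), is that point as well. *)

From HB Require Import structures.
From mathcomp Require Import all_boot all_order all_algebra.
From mathcomp Require Import ring.
From Stdlib Require Import Classical FunctionalExtensionality PropExtensionality.
Import Order.TTheory GRing.Theory Num.Theory.
Local Open Scope ring_scope.
Set Implicit Arguments. Unset Strict Implicit. Unset Printing Implicit Defensive.

Lemma neq_succ_modn j d : (1 < d)%N -> (j < d)%N -> j != (j.+1 %% d)%N.
Proof.
move=> d_gt1 j_lt; have [jS_lt | jS_ge] := ltnP j.+1 d.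
  by rewrite modn_small // neq_ltn ltnSn.
have jS_eq : j.+1 = d by apply/eqP; rewrite eqn_leq j_lt jS_ge.
by rewrite jS_eq modnn -lt0n -ltnS jS_eq.
Qed.

Lemma exists_argmax_seq (T : eqType) (R : numDomainType) (s : seq T) (f : T -> R) :
  (forall x, f x \is Num.real) -> s != [::] ->
  exists2 x, x \in s & forall y, y \in s -> f y <= f x.
Proof.
move=> fR; elim: s => // x s IHs _.
have [-> | s_neq0] := eqVneq s [::].
  by exists x; rewrite ?mem_head // => y; rewrite inE => /eqP->.
have [y ys y_max] := IHs s_neq0.
have [fx_le | fy_lt] := real_leP (fR x) (fR y).
  exists y; first by rewrite inE ys orbT.
  by move=> z; rewrite inE => /predU1P[-> | /y_max].
exists x; first exact: mem_head.
by move=> z; rewrite inE => /predU1P[-> // | /y_max/le_trans]; apply; exact: ltW.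
Qed.

Section ConvexHull.
Variable C : numClosedFieldType.
Implicit Types (S : C -> Prop) (a b c x y z t al be ga : C).

Lemma sub_co S x : S x -> co S x.
Proof.
move=> Sx; exists 1%N, (fun _ => 1), (fun _ => x).
by do !split => //; rewrite big_ord1 ?mul1r.
Qed.

Lemma co_convex S x y t : co S x -> co S y -> 0 <= t <= 1 ->
  co S (t * x + (1 - t) * y).
Proof.
move=> [m1 [w1 [p1 [Sp1 [w1_ge0 [w1_sum ->]]]]]] [m2 [w2 [p2 [Sp2 [w2_ge0 [w2_sum ->]]]]]].
move=> /andP[t_ge0 t_le1].
pose w i := match split i with inl i1 => t * w1 i1 | inr i2 => (1 - t) * w2 i2 end.
pose p i := match split i with inl i1 => p1 i1 | inr i2 => p2 i2 end.
exists (m1 + m2)%N, w, p; rewrite /w /p.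
have splitl (i : 'I_m1) : split (lshift m2 i) = inl i by exact: (unsplitK (inl i)).
have splitr (i : 'I_m2) : split (rshift m1 i) = inr i by exact: (unsplitK (inr i)).
split; first by move=> i; case: split.
split; first by move=> i; case: split => j; rewrite mulr_ge0 ?subr_ge0.
rewrite !big_split_ord /=.
under eq_bigr do rewrite splitl.
under [X in _ + X = _]eq_bigr do rewrite splitr.
under [X in _ = X + _]eq_bigr do rewrite splitl.
under [X in _ = _ + X]eq_bigr do rewrite splitr.
rewrite -!mulr_sumr w1_sum w2_sum !mulr1 subrKC !mulr_sumr; split=> //.
by congr (_ + _); apply: eq_bigr => i _; rewrite mulrA.
Qed.

Lemma co_convex3 S x y z al be ga : co S x -> co S y -> co S z ->
  0 <= al -> 0 <= be -> 0 <= ga -> al + be + ga = 1 ->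
  co S (al * x + be * y + ga * z).
Proof.
move=> Sx Sy Sz al_ge0 be_ge0 ga_ge0 sum1.
have s_ge0 : 0 <= al + be by rewrite addr_ge0.
have ga_eq : ga = 1 - (al + be) by rewrite -sum1 addrC addKr.
have [s0 | s_neq0] := eqVneq (al + be) 0.
  rewrite ga_eq s0 subr0 mul1r.
  by move/eqP: s0; rewrite paddr_eq0 // => /andP[/eqP-> /eqP->]; rewrite !mul0r !add0r.
have -> : al * x + be * y + ga * z =
    (al + be) * (al / (al + be) * x + (1 - al / (al + be)) * y) + (1 - (al + be)) * z.
  by rewrite ga_eq; field.
apply: co_convex => //; last by rewrite s_ge0 -subr_ge0 -ga_eq.
apply: co_convex; rewrite // divr_ge0 //=.
by rewrite ler_pdivrMr ?mul1r ?lerDl // lt_def s_neq0.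
Qed.

Lemma seg_l a b : seg a b a.
Proof. by apply: sub_co; left. Qed.

Lemma seg_r a b : seg a b b.
Proof. by apply: sub_co; right. Qed.

Lemma seg_sym a b z : seg a b z -> seg b a z.
Proof.
move=> [m [w [p [Sp rest]]]]; exists m, w, p; split=> // i.
by case: (Sp i); [right | left].
Qed.

Lemma seg_convex a b t : 0 <= t <= 1 -> seg a b (t * a + (1 - t) * b).
Proof. by move=> t01; apply: co_convex => //; [apply: seg_l | apply: seg_r]. Qed.

Lemma segxx a z : seg a a z -> z = a.
Proof.
move=> [m [w [p [Sp [_ [w_sum ->]]]]]].
rewrite (eq_bigr (fun i => w i * a)); first by rewrite -mulr_suml w_sum mul1r.
by move=> i _; case: (Sp i) => ->.
Qed.

Lemma seg_mid a b : seg a b ((a + b) / 2).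
Proof.
have -> : (a + b) / 2 = 2^-1 * a + (1 - 2^-1) * b by field.
by apply: seg_convex; rewrite invr_ge0 ler0n invf_le1 ?ler1n ?ltr0n.
Qed.

Lemma co_inhabited S z : co S z -> exists x, S x.
Proof.
move=> [[|m] [w [p [Sp [_ [w_sum _]]]]]]; last by exists (p ord0).
by move: w_sum; rewrite big_ord0 => /eqP; rewrite eq_sym oner_eq0.
Qed.

Lemma co_Re_le S c M z : (forall x, S x -> 'Re (c * x) <= M) ->
  co S z -> 'Re (c * z) <= M.
Proof.
move=> S_le [m [w [p [Sp [w_ge0 [w_sum ->]]]]]].
rewrite mulr_sumr raddf_sum /=.
apply: le_trans (_ : \sum_(i < m) w i * M <= _); last by rewrite -mulr_suml w_sum mul1r.
apply: ler_sum => i _; rewrite mulrCA ReMl ?ger0_real //.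
exact: ler_wpM2l (S_le _ (Sp i)).
Qed.

End ConvexHull.

(* The barycentric coordinates on 1 and on 0 of a point x + i y of the upper
   half-plane with respect to the triangle 0, 1, c + i yp both have this shape
   (the second one with 1 - x and 1 - c in place of x and c). *)
Lemma bary_coord_ge0 (R : numFieldType) (x y yp c d : R) :
  c \is Num.real -> 0 < yp -> 0 <= y <= d -> 2^-1 - d <= x ->
  d * (yp + `|c|) <= 2^-1 * yp -> 0 <= x - y / yp * c.
Proof.
move=> cR yp_gt0 /andP[y_ge0 y_le_d] x_ge hd.
have ypV_ge0 : 0 <= yp^-1 by rewrite invr_ge0 ltW.
have slope_le : y / yp * c <= d / yp * `|c|.
  apply: le_trans (_ : y / yp * `|c| <= _).
    by apply: ler_wpM2l; [exact: mulr_ge0 | exact: real_ler_norm].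
  by apply: ler_wpM2r => //; exact: ler_wpM2r.
have : 0 <= 2^-1 - d - d / yp * `|c|.
  have -> : 2^-1 - d - d / yp * `|c| = (2^-1 * yp - d * (yp + `|c|)) / yp.
    by field; rewrite gt_eqF.
  by rewrite divr_ge0 ?subr_ge0 // ltW.
by move/le_trans; apply; exact: lerB.
Qed.

Section PlaneGeometry.
Variable C : numClosedFieldType.
Implicit Types (S G P : C -> Prop) (a b c l p q v z : C).

Lemma extreme_collinear_seg P a b z : extreme P a -> extreme P b -> a != b ->
  P z -> 'Im ((z - a) / (b - a)) = 0 -> seg a b z.
Proof.
move=> [Pa a_ext] [Pb b_ext] a_neq_b Pz /Creal_ImP tR.
set t := (z - a) / (b - a) in tR.
have ba_neq0 : b - a != 0 by rewrite subr_eq0 eq_sym.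
have zE : z = a + t * (b - a) by rewrite /t divfK // addrC subrK.
have [t_le0 | t_gt0] := real_leP tR (@real0 _).
  have [t0 | t_neq0] := eqVneq t 0; first by rewrite zE t0 mul0r addr0; apply: seg_l.
  have t_lt0 : t < 0 by rewrite lt_neqAle t_neq0.
  have t1_gt1 : 1 < 1 - t by rewrite ltrDl oppr_gt0.
  have t1_gt0 : 0 < 1 - t by apply: lt_trans t1_gt1.
  suff z_eq_b : z = b by move: t_lt0; rewrite /t z_eq_b divff // ltr10.
  apply: (a_ext z b (1 - t)^-1) => //; first by rewrite invr_gt0 t1_gt0 invf_lt1.
  by rewrite zE; field; rewrite gt_eqF.
have [t_le1 | t_gt1] := real_leP tR (@real1 _).
  have -> : z = (1 - t) * a + (1 - (1 - t)) * b by rewrite zE; ring.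
  by apply: seg_convex; rewrite subr_ge0 t_le1 lerBlDr lerDl ltW.
have t_pos : 0 < t by apply: lt_trans t_gt1.
suff z_eq_a : z = a by move: t_pos; rewrite /t z_eq_a subrr mul0r ltxx.
apply: (b_ext z a t^-1) => //; first by rewrite invr_gt0 t_pos invf_lt1.
by rewrite zE; field; rewrite gt_eqF.
Qed.

Lemma Im_swap a b z : a != b -> 'Im ((z - b) / (a - b)) = - 'Im ((z - a) / (b - a)).
Proof.
move=> a_neq_b.
have -> : (z - b) / (a - b) = 1 - (z - a) / (b - a).
  by field; rewrite !subr_eq0 eq_sym a_neq_b.
by rewrite raddfB /= (Creal_ImP _ (@real1 _)) sub0r.
Qed.

Lemma normC_Re_le z : `|'Re z| <= `|z|.
Proof. exact: leif_le (leif_normC_Re_Creal z). Qed.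

Lemma normC_Im_le z : `|'Im z| <= `|z|.
Proof. by have := normC_Re_le ('i * z); rewrite ReMil normrN normrM normCi mul1r. Qed.

Lemma near_half_bounds z d : `|z - 2^-1| < d ->
  [/\ 2^-1 - d <= 'Re z, 2^-1 - d <= 1 - 'Re z & 'Im z <= d].
Proof.
move=> z_near; have half_real : (2^-1 : C) \is Num.real by rewrite rpredV rpred_nat.
have : `|'Re z - 2^-1| <= d.
  apply: le_trans (ltW z_near).
  by rewrite -[X in _ - X](Creal_ReP _ half_real) -raddfB normC_Re_le.
rewrite real_ler_norml ?rpredB ?Creal_Re // => /andP[x_lo x_hi]; split.
- by move: x_lo; rewrite lerBrDr addrC.
- have -> : 1 - 'Re z = 2^-1 - ('Re z - 2^-1) by field.
  by rewrite lerD2l lerN2.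
apply: le_trans (ltW z_near); rewrite -['Im z]subr0 -(Creal_ImP _ half_real) -raddfB.
exact: le_trans (real_ler_norm (Creal_Im _)) (normC_Im_le _).
Qed.

Lemma co_half_nbhd S a b p : a != b -> co S a -> co S b -> co S p ->
  0 < 'Im ((p - a) / (b - a)) ->
  exists2 e, 0 < e & forall w, `|w - (a + b) / 2| < e ->
    0 <= 'Im ((w - a) / (b - a)) -> co S w.
Proof.
move=> a_neq_b Sa Sb Sp.
set u := b - a; have u_neq0 : u != 0 by rewrite subr_eq0 eq_sym.
set xp := 'Re ((p - a) / u); set yp := 'Im ((p - a) / u) => yp_gt0.
have pE : p = a + (xp + 'i * yp) * u by rewrite -Crect divfK // addrC subrK.
set K := yp + `|xp| + `|1 - xp|.
have K_gt0 : 0 < K by rewrite /K !ltr_wpDr.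
set d := yp / (2 * K); have d_gt0 : 0 < d by rewrite divr_gt0 ?mulr_gt0.
have dK : d * K = 2^-1 * yp by rewrite /d; field; rewrite gt_eqF.
have d_small (c : C) : yp + `|c| <= K -> d * (yp + `|c|) <= 2^-1 * yp.
  by rewrite -dK; apply: ler_wpM2l; exact: ltW.
exists (d * `|u|); first by rewrite mulr_gt0 ?normr_gt0.
move=> w w_near.
set z := (w - a) / u; set x := 'Re z; set y := 'Im z => y_ge0.
have wE : w = a + (x + 'i * y) * u by rewrite -Crect divfK // addrC subrK.
have z_near : `|z - 2^-1| < d.
  have -> : z - 2^-1 = (w - (a + b) / 2) / u by rewrite /z /u; field.
  by rewrite normrM normfV ltr_pdivrMr ?normr_gt0.
have [x_ge x_le y_le_d] := near_half_bounds z_near.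
set be := y / yp.
have -> : w = be * p + (x - be * xp) * b + ((1 - x) - be * (1 - xp)) * a.
  by rewrite wE pE /u /be; field; rewrite gt_eqF.
have y_bounds : 0 <= y <= d by rewrite y_ge0.
apply: co_convex3 => //.
- by rewrite divr_ge0 // ltW.
- apply: (bary_coord_ge0 (d := d)) => //; first exact: Creal_Re.
  by apply: d_small; rewrite /K lerDl.
- apply: (bary_coord_ge0 (x := 1 - x) (c := 1 - xp) (d := d)) => //.
    by rewrite rpredB ?real1 ?Creal_Re.
  by apply: d_small; rewrite /K -addrA lerD2l lerDr.
- by ring.
Qed.

Lemma co_mid_nbhd S a b p q : a != b -> co S a -> co S b -> co S p -> co S q ->
  0 < 'Im ((p - a) / (b - a)) -> 'Im ((q - a) / (b - a)) < 0 ->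
  exists2 e, 0 < e & forall w, `|w - (a + b) / 2| < e -> co S w.
Proof.
move=> a_neq_b Sa Sb Sp Sq p_above q_below.
have b_neq_a : b != a by rewrite eq_sym.
have [e1 e1_gt0 near1] := co_half_nbhd a_neq_b Sa Sb Sp p_above.
have q_above : 0 < 'Im ((q - b) / (a - b)) by rewrite Im_swap // oppr_gt0.
have [e2 e2_gt0 near2] := co_half_nbhd b_neq_a Sb Sa Sq q_above.
have e12 : e1 >=< e2 by rewrite real_comparable ?gtr0_real.
exists (Num.min e1 e2); first by rewrite comparable_lt_min // e1_gt0.
move=> w; rewrite comparable_lt_min // => /andP[w_near1 w_near2].
have [w_above | w_below] := real_leP (@real0 C) (Creal_Im ((w - a) / (b - a))).
  exact: near1.
apply: near2; first by rewrite [b + a]addrC.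
by rewrite Im_swap // oppr_ge0 ltW.
Qed.

Lemma boundary_mid_one_side S a b : a != b -> co S a -> co S b ->
  boundary (co S) ((a + b) / 2) ->
  (forall z, co S z -> 'Im ((z - a) / (b - a)) <= 0) \/
  (forall z, co S z -> 'Im ((z - b) / (a - b)) <= 0).
Proof.
move=> a_neq_b Sa Sb [_ mid_out].
have [[p Sp p_above] | no_above] :=
  classic (exists2 p, co S p & 0 < 'Im ((p - a) / (b - a))).
  right=> q Sq; rewrite Im_swap // oppr_le0.
  have [// | q_below] := real_leP (@real0 C) (Creal_Im ((q - a) / (b - a))).
  have [e e_gt0 near_mid] := co_mid_nbhd a_neq_b Sa Sb Sp Sq p_above q_below.
  have [w [w_out w_near]] := mid_out e e_gt0.
  by case: w_out; apply: near_mid.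
left=> z Sz.
have [// | z_above] := real_leP (Creal_Im ((z - a) / (b - a))) (@real0 C).
by case: no_above; exists z.
Qed.

Lemma argmax_boundary G c l : c != 0 -> G l ->
  (forall z, G z -> 'Re (c * z) <= 'Re (c * l)) -> boundary G l.
Proof.
move=> c_neq0 Gl l_max; split=> e e_gt0.
  by exists l; rewrite subrr normr0.
have nc_gt0 : 0 < `|c| by rewrite normr_gt0.
set t := e / (2 * `|c|); have t_gt0 : 0 < t by rewrite divr_gt0 ?mulr_gt0.
have Re_cc : 'Re (c * c^*) = `|c| ^+ 2 by rewrite -normCK; apply/Creal_ReP/realX/normr_real.
exists (l + t * c^*); split.
  move/l_max; rewrite mulrDr raddfD /= mulrCA (ReMl (gtr0_real t_gt0)) Re_cc.
  by rewrite gerDl pmulr_rle0 // lt_geF // exprn_gt0.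
rewrite addrC addKr normrM norm_conjC gtr0_norm // /t.
have -> : e / (2 * `|c|) * `|c| = e / 2 by field; rewrite gt_eqF.
by rewrite gtr_pMr // invf_lt1 ?ltr1n.
Qed.

Lemma co_finite_boundary_eq S (s : seq C) v :
  (forall z, S z <-> z \in s) -> (forall z, boundary (co S) z -> z = v) ->
  forall p, co S p -> p = v.
Proof.
move=> S_s bd_v p Sp; have [// | p_neq_v] := eqVneq p v; exfalso.
set c := (p - v)^*.
have c_neq0 : c != 0 by rewrite conjC_eq0 subr_eq0.
have s_neq0 : s != [::].
  by have [x /S_s] := co_inhabited Sp; apply: contraTneq => ->.
have [l ls l_max] :=
  exists_argmax_seq (f := fun z => 'Re (c * z)) (fun z => Creal_Re _) s_neq0.
have co_le z : co S z -> 'Re (c * z) <= 'Re (c * l).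
  by apply: co_Re_le => x /S_s; apply: l_max.
have l_eq_v : l = v.
  by apply/bd_v/(argmax_boundary c_neq0) => //; apply: sub_co; apply/S_s.
have Re_c : 'Re (c * (p - v)) = `|p - v| ^+ 2.
  by rewrite /c mulrC -normCK; apply/Creal_ReP/realX/normr_real.
have := co_le p Sp; rewrite l_eq_v -subr_le0 -raddfB /= -mulrBr Re_c.
by rewrite lt_geF // exprn_gt0 // normr_gt0 subr_eq0.
Qed.

End PlaneGeometry.

Section Forms.
Variable C : numClosedFieldType.
Local Open Scope sesquilinear_scope.

Definition qform m (B : 'M[C]_m) (y x : 'cV[C]_m) : C := (y ^t* *m B *m x) ord0 ord0.
Definition sqnorm m (x : 'cV[C]_m) : C := qform 1%:M x x.
Definition psdmx m (P : 'M[C]_m) : Prop := forall z, 0 <= qform P z z.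

Variable m : nat.
Implicit Types (B P : 'M[C]_m) (x y z u : 'cV[C]_m) (a c : C).

Lemma qformE B y x : qform B y x = \sum_i \sum_j (y i ord0)^* * B i j * x j ord0.
Proof.
rewrite /qform mxE exchange_big /=; apply: eq_bigr => j _.
by rewrite mxE big_distrl /=; apply: eq_bigr => i _; rewrite !mxE.
Qed.

Lemma sqnormE x : sqnorm x = \sum_i (x i ord0)^* * x i ord0.
Proof. by rewrite /sqnorm /qform mulmx1 mxE; apply: eq_bigr => i _; rewrite !mxE. Qed.

Lemma qformDl B y1 y2 x : qform B (y1 + y2) x = qform B y1 x + qform B y2 x.
Proof. by rewrite /qform linearD map_mxD !mulmxDl mxE. Qed.

Lemma qformDr B y x1 x2 : qform B y (x1 + x2) = qform B y x1 + qform B y x2.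
Proof. by rewrite /qform mulmxDr mxE. Qed.

Lemma qformZl B c y x : qform B (c *: y) x = c^* * qform B y x.
Proof. by rewrite /qform linearZ map_mxZ /= -!scalemxAl mxE. Qed.

Lemma qformZr B c y x : qform B y (c *: x) = c * qform B y x.
Proof. by rewrite /qform -scalemxAr mxE. Qed.

Lemma qformZZ B c x : qform B (c *: x) (c *: x) = c^* * c * qform B x x.
Proof. by rewrite qformZl qformZr mulrA. Qed.

Lemma qform_addmx B1 B2 y x : qform (B1 + B2) y x = qform B1 y x + qform B2 y x.
Proof. by rewrite /qform mulmxDr mulmxDl mxE. Qed.

Lemma qform_scalemx a B y x : qform (a *: B) y x = a * qform B y x.
Proof. by rewrite /qform -scalemxAr -scalemxAl mxE. Qed.

Lemma qform_adj B y x : qform (B ^t*) y x = (qform B x y)^*.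
Proof.
rewrite !qformE rmorph_sum exchange_big /=; apply: eq_bigr => i _.
by rewrite rmorph_sum; apply: eq_bigr => j _; rewrite !mxE !rmorphM /= conjCK; ring.
Qed.

Lemma sqnorm_ge0 x : 0 <= sqnorm x.
Proof. by rewrite sqnormE sumr_ge0 // => i _; rewrite mulrC mul_conjC_ge0. Qed.

Lemma sqnorm_eq0 x : sqnorm x = 0 -> x = 0.
Proof.
rewrite sqnormE => /psumr_eq0P x0; apply/matrixP => i j; rewrite (ord1 j) mxE.
by apply/eqP; rewrite -mul_conjC_eq0 mulrC x0 // => l _; rewrite mulrC mul_conjC_ge0.
Qed.

Lemma sqnormZ c x : sqnorm (c *: x) = c^* * c * sqnorm x.
Proof. exact: qformZZ. Qed.

Lemma unit_scale_decomposition x : x != 0 ->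
  exists r u, [/\ 0 < r, x = r *: u & sqnorm u = 1].
Proof.
move=> x_neq0.
have nx_gt0 : 0 < sqnorm x.
  by rewrite lt_def sqnorm_ge0 andbT; apply: contra x_neq0 => /eqP/sqnorm_eq0->.
set r := sqrtC (sqnorm x); have r_gt0 : 0 < r by rewrite sqrtC_gt0.
exists r, (r^-1 *: x); split => //; first by rewrite scalerA divff ?gt_eqF // scale1r.
rewrite sqnormZ conj_Creal ?rpredV ?gtr0_real // -invfM -expr2 sqrtCK.
by rewrite mulVf ?gt_eqF.
Qed.

Lemma psdmx_unit P : (forall u, sqnorm u = 1 -> 0 <= qform P u u) -> psdmx P.
Proof.
move=> P_unit z; have [-> | z_neq0] := eqVneq z 0.
  by rewrite -(scale0r 0) qformZZ conjC0 !mul0r.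
have [r [u [r_gt0 -> u_unit]]] := unit_scale_decomposition z_neq0.
by rewrite qformZZ mulr_ge0 ?P_unit // mulrC mul_conjC_ge0.
Qed.

Lemma psdmx_null_cross P x y : psdmx P ->
  qform P x x = 0 -> qform P y y = 0 -> qform P x y = 0.
Proof.
move=> P_psd Px Py.
have cross_ge0 c : 0 <= c * qform P x y + c^* * qform P y x.
  have := P_psd (x + c *: y).
  by rewrite !qformDl !qformDr !qformZl !qformZr Px Py !mulr0 add0r addr0 addrC.
have sum_ge0 := cross_ge0 1; have sum_le0 := cross_ge0 (-1).
rewrite conjC1 !mul1r in sum_ge0; rewrite conjCN1 !mulN1r -opprD oppr_ge0 in sum_le0.
have diff_ge0 := cross_ge0 'i; have diff_le0 := cross_ge0 (- 'i).
rewrite conjCi mulNr in diff_ge0.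
rewrite rmorphN /= conjCi opprK mulNr addrC -opprB oppr_ge0 in diff_le0.
have sym : qform P x y = qform P y x.
  apply/eqP; rewrite -subr_eq0 -(mulrI_eq0 _ (lregP (neq0Ci C))) mulrBr.
  by apply/eqP/le_anti; rewrite diff_le0 diff_ge0.
have /eqP : qform P x y + qform P y x = 0 by apply: le_anti; rewrite sum_le0 sum_ge0.
by rewrite -sym -mulr2n -mulr_natr mulf_eq0 pnatr_eq0 orbF => /eqP.
Qed.

Lemma psdmx_null_comb P x y a c : psdmx P ->
  qform P x x = 0 -> qform P y y = 0 -> qform P (a *: x + c *: y) (a *: x + c *: y) = 0.
Proof.
move=> P_psd Px Py.
have Pxy := psdmx_null_cross P_psd Px Py; have Pyx := psdmx_null_cross P_psd Py Px.
by rewrite !qformDl !qformDr !qformZl !qformZr Px Py Pxy Pyx !mulr0 !addr0.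
Qed.

Lemma psdmx_null_unit_at P (k : 'I_m) x y : psdmx P ->
  qform P x x = 0 -> qform P y y = 0 -> y k ord0 *: x != x k ord0 *: y ->
  exists u, [/\ u k ord0 = 0, sqnorm u = 1 & qform P u u = 0].
Proof.
move=> P_psd Px Py xy_indep.
set w := y k ord0 *: x + (- x k ord0) *: y.
have w_neq0 : w != 0 by rewrite /w scaleNr subr_eq0.
have [r [u [r_gt0 wE u_unit]]] := unit_scale_decomposition w_neq0.
have r_neq0 : r != 0 by rewrite gt_eqF.
have wk0 : w k ord0 = 0 by rewrite !mxE mulNr mulrC subrr.
exists u; split=> //.
  by move/eqP: wk0; rewrite wE mxE mulf_eq0 (negPf r_neq0) => /eqP.
move/eqP: (psdmx_null_comb (y k ord0) (- x k ord0) P_psd Px Py).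
by rewrite -/w wE qformZZ !mulf_eq0 conjC_eq0 (negPf r_neq0) => /eqP.
Qed.

End Forms.

Section FieldOfValues.
Variable C : numClosedFieldType.
Local Open Scope sesquilinear_scope.

Lemma fovE m (A : 'M[C]_m) z :
  field_of_values A z <-> exists2 x, sqnorm x = 1 & z = qform A x x.
Proof.
have unitE x : (x ^t* *m x = 1%:M) <-> sqnorm x = 1.
  split=> [x_unit | <-]; first by rewrite /sqnorm /qform mulmx1 x_unit mxE.
  by rewrite [LHS]mx11_scalar /sqnorm /qform mulmx1.
by split=> [[x [/unitE x_unit ->]] | [x /unitE x_unit ->]]; exists x.
Qed.

Lemma fov_psubmx n (A : 'M[C]_n.+1) k (u : 'cV[C]_n.+1) :
  u k ord0 = 0 -> sqnorm u = 1 -> field_of_values (psubmx A k) (qform A u u).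
Proof.
move=> uk0 u_unit; apply/fovE; exists (row' k u).
  rewrite -u_unit !sqnormE (bigD1_ord k) //= uk0 mulr0 add0r.
  by apply: eq_bigr => i _; rewrite !mxE.
rewrite !qformE (bigD1_ord k) //= big1 ?add0r => [|j _]; last by rewrite uk0 conjC0 !mul0r.
apply: eq_bigr => i _; rewrite (bigD1_ord k) //= uk0 mulr0 add0r.
by apply: eq_bigr => j _; rewrite !mxE.
Qed.

Lemma fov_psubmx_support n (A : 'M[C]_n.+1) k (c M a b : C) :
  (forall z, field_of_values A z -> 'Re (c * z) <= M) ->
  field_of_values A a -> field_of_values A b -> a != b ->
  'Re (c * a) = M -> 'Re (c * b) = M ->
  exists z, [/\ field_of_values (psubmx A k) z, field_of_values A z & 'Re (c * z) = M].
Proof.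
move=> F_le Fa Fb a_neq_b ca_eq cb_eq.
set P := M *: 1%:M + ((- 2^-1 * c) *: A + (- 2^-1 * c^*) *: A ^t*).
have qP z : qform P z z = M * sqnorm z - 'Re (c * qform A z z).
  rewrite !qform_addmx !qform_scalemx qform_adj ReE rmorphM /=.
  by rewrite /sqnorm; field.
have P_psd : psdmx P.
  apply: psdmx_unit => u u_unit; rewrite qP u_unit mulr1 subr_ge0.
  by apply/F_le/fovE; exists u.
have [x x_unit aE] := (fovE A a).1 Fa.
have [y y_unit bE] := (fovE A b).1 Fb.
have Px : qform P x x = 0 by rewrite qP x_unit mulr1 -aE ca_eq subrr.
have Py : qform P y y = 0 by rewrite qP y_unit mulr1 -bE cb_eq subrr.
have [xk0 | xk_neq0] := eqVneq (x k ord0) 0.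
  by exists a; split=> //; rewrite aE; apply: fov_psubmx.
have [|u [uk0 u_unit Pu]] := psdmx_null_unit_at (k := k) P_psd Px Py.
  apply: contraNneq a_neq_b => xk_y.
  set g := y k ord0 / x k ord0.
  have yE : y = g *: x by apply: (scalerI xk_neq0); rewrite scalerA mulrC divfK.
  have gg : g^* * g = 1 by move: y_unit; rewrite yE sqnormZ x_unit mulr1.
  by rewrite aE bE yE qformZZ gg mul1r.
exists (qform A u u); split; [exact: fov_psubmx | by apply/fovE; exists u |].
by move/eqP: Pu; rewrite qP u_unit mulr1 subr_eq0 => /eqP.
Qed.

Lemma fov_psubmx_inhabited n (A : 'M[C]_n.+1) k : (0 < n)%N ->
  exists z, field_of_values (psubmx A k) z /\ field_of_values A z.
Proof.
move=> n_gt0; set u : 'cV[C]_n.+1 := delta_mx (lift k (Ordinal n_gt0)) ord0.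
have uk0 : u k ord0 = 0 by rewrite mxE (negPf (neq_lift _ _)).
have u_unit : sqnorm u = 1.
  rewrite sqnormE (bigD1 (lift k (Ordinal n_gt0))) //= big1 => [|i /negPf i_neq].
    by rewrite !mxE !eqxx conjC1 mulr1 addr0.
  by rewrite mxE i_neq mulr0.
exists (qform A u u); split; first exact: fov_psubmx.
by apply/fovE; exists u.
Qed.

Lemma fov_psubmx_meets_seg n (A : 'M[C]_n.+1) k a b :
  extreme (field_of_values A) a -> extreme (field_of_values A) b -> a != b ->
  (forall z, field_of_values A z -> 'Im ((z - a) / (b - a)) <= 0) ->
  exists z, field_of_values (psubmx A k) z /\ seg a b z.
Proof.
move=> a_ext b_ext a_neq_b F_below.
set c := - 'i / (b - a).
have Re_c z : 'Re (c * z) = 'Re (c * a) + 'Im ((z - a) / (b - a)).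
  have -> : c * z = c * a + - ('i * ((z - a) / (b - a))) by rewrite /c; ring.
  by rewrite raddfD raddfN /= ReMil opprK.
have [||z [Fkz Fz]] :=
  fov_psubmx_support k (M := 'Re (c * a)) _ a_ext.1 b_ext.1 a_neq_b erefl _.
- by move=> z Fz; rewrite (Re_c z) gerDl F_below.
- by rewrite (Re_c b) divff ?subr_eq0 1?eq_sym // (Creal_ImP _ (@real1 _)) addr0.
move/eqP; rewrite (Re_c z) -subr_eq0 addrAC subrr add0r => /eqP z_on_line.
by exists z; split=> //; apply: (extreme_collinear_seg a_ext b_ext).
Qed.

Lemma spectrum_finite m (A : 'M[C]_m) : exists s : seq C, forall z, spectrum A z <-> z \in s.
Proof.
have [s char_polyE] := closed_field_poly_normal (char_poly A).
exists s => z; rewrite /spectrum eigenvalue_root_char char_polyE.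
by rewrite (monicP (char_poly_monic A)) scale1r root_prod_XsubC.
Qed.

Lemma convexoid_fovE m (A : 'M[C]_m) :
  convexoid A -> field_of_values A = co (spectrum A).
Proof.
by move=> convA; apply: functional_extensionality => z; apply: propositional_extensionality.
Qed.

Lemma convexoid_fov_point n (A : 'M[C]_n.+1) v : convexoid A ->
  (forall z, boundary (field_of_values A) z -> z = v) ->
  forall z, field_of_values A z -> z = v.
Proof.
move=> /convexoid_fovE ->; have [s spec_s] := spectrum_finite A.
exact: co_finite_boundary_eq.
Qed.

Lemma convexoid_fov_psubmx_meets_side n (A : 'M[C]_n.+1) k a b : convexoid A ->
  extreme (field_of_values A) a -> extreme (field_of_values A) b -> a != b ->
  boundary (field_of_values A) ((a + b) / 2) ->
  exists z, field_of_values (psubmx A k) z /\ seg a b z.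
Proof.
move=> /convexoid_fovE FE a_ext b_ext a_neq_b mid_bd.
have [F_below | F_above] :
    (forall z, field_of_values A z -> 'Im ((z - a) / (b - a)) <= 0) \/
    (forall z, field_of_values A z -> 'Im ((z - b) / (a - b)) <= 0).
  by rewrite FE; apply: boundary_mid_one_side; rewrite -?FE //; [case: a_ext | case: b_ext].
- exact: fov_psubmx_meets_seg.
- have b_neq_a : b != a by rewrite eq_sym.
  have [z [Fkz z_ba]] := fov_psubmx_meets_seg k b_ext a_ext b_neq_a F_above.
  by exists z; split=> //; apply: seg_sym.
Qed.

End FieldOfValues.

Theorem mainTheorem3 (C : numClosedFieldType) (n : nat) (hn : (1 <= n)%N)
    (A : 'M[C]_n.+1) :
  convexoid A ->
  forall k : 'I_n.+1,
    inscribed (field_of_values (psubmx A k)) (field_of_values A).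
Proof.
move=> convA k v [v_uniq [v_ext v_bd]] j j_lt.
have [size1 | size_gt1] : size v = 1%N \/ (1 < size v)%N.
  by case: (size v) j_lt => [|[|d]] //; [left | right].
- have j0 : j = 0%N by move: j_lt; rewrite size1; case: j.
  have sideE z : side v 0 z -> z = nth 0 v 0 by rewrite /side size1 modnn; apply: segxx.
  have [z [Fkz Fz]] := fov_psubmx_inhabited A k hn.
  have z_eq : z = nth 0 v 0.
    apply: (convexoid_fov_point convA) Fz => w /v_bd[i].
    by rewrite size1 ltnS leqn0 => /eqP-> /sideE.
  by exists z; split=> //; rewrite j0 z_eq /side size1 modnn; apply: seg_l.
- have jS_lt : (j.+1 %% size v < size v)%N by rewrite ltn_pmod // ltnW.
  apply: convexoid_fov_psubmx_meets_side => //.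
  + by apply/v_ext; rewrite mem_nth.
  + by apply/v_ext; rewrite mem_nth.
  + by rewrite nth_uniq // neq_succ_modn.
  + by apply/v_bd; exists j => //; apply: seg_mid.
Qed.
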